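(* Let $n\ge3$ and $A\subseteq[n]$. If $n-1\in A$, then $f_n(A\setminus\{n-1\})\ge f_n(A)$. If $2\notin A$, then $f_n(A\cup\{2\})\ge f_n(A)$.
   Context: For $m\ge1$ and a set $B$ of positive integers, $f_m(B)$ denotes the number of linear orders $q$ on $[m]$ such that for every triple $i<j<k$ in $[m]$: if $j\in B$ then $i$ is not ranked last among $\{i,j,k\}$ in $q$, and if $j\notin B$ then $k$ is not ranked first among $\{i,j,k\}$ in $q$. *)

From mathcomp Require Import all_boot all_order all_fingroup.
Set Implicit Arguments. Unset Strict Implicit. Unset Printing Implicit Defensive.

(* Elements of [m] = {1,...,m} are encoded by i : 'I_m, standing for i.+1.
   A linear order q on [m] is encoded by the bijection s : {perm 'I_m}
   assigning to each element its rank (0 = first, m-1 = last). *)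

Definition good_order (m : nat) (B : pred nat) (s : {perm 'I_m}) : bool :=
  [forall i : 'I_m, forall j : 'I_m, forall k : 'I_m,
     ((i < j) && (j < k)) ==>
     (if B j.+1
      then ~~ ((s j < s i) && (s k < s i))
      else ~~ ((s k < s i) && (s k < s j)))].

Definition f (m : nat) (B : pred nat) : nat :=
  #|[set s : {perm 'I_m} | good_order B s]|.

From mathcomp Require Import all_boot all_order all_fingroup.
From mathcomp Require Import zify.
Set Implicit Arguments. Unset Strict Implicit. Unset Printing Implicit Defensive.

(* Whether n-1 belongs to A only matters for the triples (i, n-1, n).  With
   n-1 in A they force n-1 or n to be ranked last; without it they only forbid
   n to come before both i and n-1.  So every order that is good for A is good
   for A minus n-1, except when n-1 is last and n is not second to last;
   such an order is repaired by moving n-1 to just before n, after which n-1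
   compares with every other element exactly as n does.  The repaired orders
   rank neither n-1 nor n last, so they differ from the unrepaired ones.
   The statement about 2 is the one about n-1 read backwards: reversing both
   the elements and the order swaps "i is not last" with "k is not first" and
   replaces A by {x | n+1-x not in A}. *)

Lemma good_orderP m (B : pred nat) (s : {perm 'I_m}) :
  reflect (forall i j k : 'I_m, i < j -> j < k ->
             if B j.+1 then ~~ ((s j < s i) && (s k < s i))
             else ~~ ((s k < s i) && (s k < s j)))
          (good_order B s).
Proof.
apply: (iffP forallP) => [good i j k ij jk | good i].
  by move/forallP: (good i) => /(_ j) /forallP /(_ k) /implyP; apply; rewrite ij.
by apply/forallP=> j; apply/forallP=> k; apply/implyP=> /andP[ij jk]; apply: good.
Qed.

Lemma eq_f m (B B' : pred nat) :
  {in [pred x | 0 < x <= m], B =1 B'} -> f m B = f m B'.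
Proof.
move=> eqB; apply: eq_card => s; rewrite !inE.
by apply/good_orderP/good_orderP => good i j k ij jk; have := good i j k ij jk;
  rewrite eqB // inE /= ltn_ord.
Qed.

Lemma eq_perm_val m (s : {perm 'I_m}) (x y : 'I_m) :
  (s x == s y :> nat) = (x == y).
Proof. by apply/eqP/eqP => [/val_inj/perm_inj | ->]. Qed.

Definition reverse_pred m (B : pred nat) : pred nat := fun x => ~~ B (m.+1 - x).

Definition reverse_perm m (s : {perm 'I_m}) : {perm 'I_m} :=
  let r := perm (@rev_ord_inj m) in (r * s * r)%g.

Lemma reverse_permE m (s : {perm 'I_m}) x : reverse_perm s x = rev_ord (s (rev_ord x)).
Proof. by rewrite !permM !permE. Qed.

Lemma reverse_perm_inj m : injective (@reverse_perm m).
Proof. by move=> s t /mulIg /mulgI. Qed.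

Lemma ltn_rev_ord m (x y : 'I_m) : (rev_ord x < rev_ord y) = (y < x).
Proof. by rewrite /=; have := ltn_ord x; have := ltn_ord y; lia. Qed.

Lemma reverse_predK m (B : pred nat) :
  {in [pred x | 0 < x <= m], reverse_pred m (reverse_pred m B) =1 B}.
Proof. by move=> x /andP[_ xm]; rewrite /reverse_pred negbK; congr B; lia. Qed.

Lemma good_order_reverse m (B : pred nat) (s : {perm 'I_m}) :
  good_order B s -> good_order (reverse_pred m B) (reverse_perm s).
Proof.
move/good_orderP => good; apply/good_orderP => i j k ij jk.
have := good (rev_ord k) (rev_ord j) (rev_ord i); rewrite !ltn_rev_ord => /(_ jk ij).
have -> : (rev_ord j).+1 = m.+1 - j.+1 by rewrite /=; have := ltn_ord j; lia.
by rewrite /reverse_pred !reverse_permE !ltn_rev_ord; case: (B _); rewrite andbC.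
Qed.

Lemma f_reverse_le m (B : pred nat) : f m B <= f m (reverse_pred m B).
Proof.
rewrite /f -(card_imset _ (@reverse_perm_inj m)); apply/subset_leq_card/subsetP.
by move=> t /imsetP[s]; rewrite inE => /good_order_reverse good ->; rewrite inE.
Qed.

Lemma f_reverse m (B : pred nat) : f m (reverse_pred m B) = f m B.
Proof.
apply/eqP; rewrite eqn_leq -{1}(eq_f (@reverse_predK m B)).
by rewrite !f_reverse_le.
Qed.

Lemma ltn_bump2 h i j : (bump h i < bump h j) = (i < j).
Proof. by rewrite !ltnNge leq_bump2. Qed.

Lemma val_lift_perm_max n (r t : 'I_n.+1) :
  t != ord_max -> val (lift_perm ord_max r 1 t) = bump r t.
Proof.
case: (unliftP ord_max t) => [k ->|->]; rewrite ?eqxx // lift_perm_lift perm1 /=.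
by rewrite /bump [n <= k]leqNgt ltn_ord.
Qed.

Section DropPenultimate.

Variables (m : nat) (A : pred nat).
Hypothesis A_penult : A m.+1.

(* [a] and [b] encode the elements n-1 and n, where n = m.+2. *)
Let a : 'I_m.+2 := Ordinal (leqnSn m.+1).
Let b : 'I_m.+2 := ord_max.

Lemma good_order_top_a_or_b s : good_order A s -> (s a == ord_max) || (s b == ord_max).
Proof.
move/good_orderP => good; pose t := (s^-1 ord_max)%g.
have st : s t = ord_max by rewrite permKV.
have [<-|ta] := eqVneq t a; first by rewrite st eqxx.
have [<-|tb] := eqVneq t b; first by rewrite st eqxx orbT.
have := good t a b; rewrite A_penult st /=.
have := ltn_ord t; have := ltn_ord (s a); have := ltn_ord (s b).
have := eq_perm_val s t a; have := eq_perm_val s t b.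
rewrite st (negbTE ta) (negbTE tb) /=.
move: ta tb; rewrite -!val_eqE /=; lia.
Qed.

Lemma gt_a_eq_b (k : 'I_m.+2) : a < k -> k = b.
Proof. by move=> ak; apply: val_inj; have := ltn_ord k; move: ak => /=; lia. Qed.

Lemma b_neq_a : b != a.
Proof. by rewrite -val_eqE /= gtn_eqF. Qed.

Let A' : pred nat := fun x => A x && (x != m.+1).

Lemma A'_off_a (j : 'I_m.+2) : j != a -> A' j.+1 = A j.+1.
Proof. by rewrite /A' eqSS -val_eqE => ->; rewrite andbT. Qed.

(* [lift_perm ord_max r 1] sends the top rank to [r] and shifts the ranks
   from [r] on up by one. *)
Definition move_a_before_b (s : {perm 'I_m.+2}) : {perm 'I_m.+2} :=
  (s * lift_perm ord_max (s b) 1)%g.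

Section MoveABeforeB.

Variable s : {perm 'I_m.+2}.
Hypothesis sa_top : s a = ord_max.
Local Notation s' := (move_a_before_b s).

Lemma move_a_before_b_a : s' a = s b.
Proof. by rewrite permM sa_top lift_perm_id. Qed.

Lemma val_move_a_before_b x : x != a -> val (s' x) = bump (s b) (s x).
Proof.
by move=> xa; rewrite permM val_lift_perm_max // -sa_top (inj_eq perm_inj).
Qed.

Lemma ltn_move_a_before_b x y :
  x != a -> y != a -> (s' x < s' y) = (s x < s y).
Proof. by move=> xa ya; rewrite !val_move_a_before_b // ltn_bump2. Qed.

Lemma val_move_a_before_b_b : val (s' b) = (s b).+1.
Proof. by rewrite val_move_a_before_b ?b_neq_a // /bump leqnn. Qed.

Lemma move_a_before_b_a_b : s' a < s' b.
Proof. by rewrite val_move_a_before_b_b move_a_before_b_a. Qed.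

Lemma move_a_before_b_twin x : x != a -> x != b ->
  ((s' x < s' a) = (s x < s b)) * ((s' a < s' x) = (s b < s x)).
Proof.
move=> xa xb; rewrite move_a_before_b_a val_move_a_before_b //.
have := eq_perm_val s x b; rewrite (negbTE xb) /bump.
by case: (leqP (s b) (s x)) => le /=; split; lia.
Qed.

Lemma good_order_move_a_before_b : good_order A s -> good_order A' s'.
Proof.
move/good_orderP => good; apply/good_orderP => i j k ij jk.
have [ja|ja] := eqVneq j a.
  move: jk; rewrite ja => /gt_a_eq_b ->.
  by rewrite /A' /= eqxx andbF [s' b < s' a]ltnNge (ltnW move_a_before_b_a_b) andbF.
have ia : i != a by rewrite -val_eqE /=; have := ltn_ord k; lia.
rewrite A'_off_a //.
have [ka|ka] := eqVneq k a.
  have jb : j != b by rewrite -val_eqE /=; move: jk; rewrite ka /=; lia.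
  have ib : i != b by rewrite -val_eqE /=; move: ij jk; rewrite ka /=; lia.
  have := good i j b ij (leq_trans jk (leq_ord k)).
  by rewrite ka ltn_move_a_before_b // !move_a_before_b_twin.
by have := good i j k ij jk; rewrite !ltn_move_a_before_b.
Qed.

End MoveABeforeB.

Lemma good_order_drop_of_b_above (s : {perm 'I_m.+2}) :
  good_order A s -> (forall i : 'I_m.+2, i < a -> s i < s b) -> good_order A' s.
Proof.
move/good_orderP => good above; apply/good_orderP => i j k ij jk.
have [ja|ja] := eqVneq j a; last by rewrite A'_off_a //; apply: good.
move: jk ij; rewrite ja => /gt_a_eq_b -> /above ib.
by rewrite /A' /= eqxx andbF [s b < s i]ltnNge ltnW.
Qed.

Lemma f_drop_penultimate : f m.+2 A <= f m.+2 (fun x => A x && (x != m.+1)).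
Proof.
pose G := [set s : {perm 'I_m.+2} | good_order A s].
pose G' := [set s : {perm 'I_m.+2} | good_order A' s].
pose M := [set s : {perm 'I_m.+2} | (s a == ord_max) && (s b < m)].
pose T := [set s : {perm 'I_m.+2} | (s a == ord_max) || (s b == ord_max)].
have moved_le : #|G :&: M| <= #|G' :\: T|.
  have inj : {in G :&: M &, injective move_a_before_b}.
    move=> s1 s2; rewrite !inE => /and3P[_ /eqP s1a _] /and3P[_ /eqP s2a _] e.
    have eb : s1 b = s2 b.
      by rewrite -(move_a_before_b_a s1a) -(move_a_before_b_a s2a) e.
    by move: e; rewrite /move_a_before_b eb => /mulIg.
  rewrite -(card_in_imset inj); apply/subset_leq_card/subsetP => s' /imsetP[s].
  rewrite !inE => /and3P[good /eqP sa sb] ->.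
  rewrite good_order_move_a_before_b // andbT negb_or -!val_eqE /=.
  by rewrite move_a_before_b_a // val_move_a_before_b_b //; lia.
have fixed_sub : G :\: M \subset G' :&: T.
  apply/subsetP => s; rewrite !inE => /andP[notM good].
  have top := good_order_top_a_or_b good; rewrite top andbT.
  apply: good_order_drop_of_b_above => // i ia.
  have := eq_perm_val s i a; have := eq_perm_val s i b; have := eq_perm_val s a b.
  have := ltn_ord (s i); have := ltn_ord (s b).
  by move: ia notM top; rewrite -!val_eqE /=; lia.
rewrite /f -/G -/G' -(cardsID M G) -(cardsID T G') addnC.
exact: leq_add (subset_leq_card fixed_sub) moved_le.
Qed.

End DropPenultimate.

Theorem corollary2 (n : nat) (A : pred nat) :
  3 <= n ->
  (forall x, A x -> 1 <= x <= n) ->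
  (A n.-1 -> f n (fun x => A x && (x != n.-1)) >= f n A) /\
  (~~ A 2 -> f n (fun x => A x || (x == 2)) >= f n A).
Proof.
(* [f n] only reads its predicate on [1, n]. *)
case: n => [|[|m]] // _ _; split => [|A2]; first exact: f_drop_penultimate.
rewrite -(f_reverse _ A) -(f_reverse _ (fun x => A x || (x == 2))).
apply: (leq_trans (f_drop_penultimate _)); first by rewrite /reverse_pred -addn2 addKn.
apply/eq_leq/eq_f => x /andP[_ xm]; rewrite /reverse_pred negb_or.
by congr (_ && ~~ _); apply/eqP/eqP; lia.
Qed.
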